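(* Let $F$ be a finite field of characteristic $3$. Let $k\ge 0$ be an integer, $m=3k+1$, and $t$ an integer with $t^3\equiv 1\pmod m$ and $\gcd(m,t-1)=1$. Let $G=T_{3m}=\langle x,y\mid x^m=y^3=1,\ y^{-1}xy=x^t\rangle$ (of order $3m$), $FG$ its group algebra, and $H=\langle x\rangle$. Then $J(FG)\cap\Delta(G,H)=0$.
   Context: $J(FG)$ is the Jacobson radical of $FG$. $H=\langle x\rangle$ is a normal subgroup of $G$, and $\Delta(G,H)$ is the ideal of $FG$ generated by $\{h-1\mid h\in H\}$. *)

From HB Require Import structures.
From mathcomp Require Import all_boot all_algebra all_fingroup.
Set Implicit Arguments. Unset Strict Implicit. Unset Printing Implicit Defensive.
Import GRing.Theory.
Local Open Scope ring_scope.

(* Group algebra F[gT] of a finite group gT over a finite field F, realised as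
   functions gT -> F with the convolution product (NOT the pointwise product). *)
Section GroupAlgebra.
Variables (F : finFieldType) (gT : finGroupType).

Definition galg := {ffun gT -> F}.

Definition gmul (a b : galg) : galg :=
  [ffun g => \sum_(h : gT) a h * b (h^-1 * g)%g].

Definition gdelta (g : gT) : galg := [ffun z => (z == g)%:R].

Definition left_idealb (I : {set galg}) : bool :=
  [&& (0 : galg) \in I,
      [forall a in I, forall b in I, (a - b) \in I] &
      [forall r : galg, forall a in I, gmul r a \in I]].

Definition two_sided_idealb (I : {set galg}) : bool :=
  left_idealb I && [forall r : galg, forall a in I, gmul a r \in I].

Definition maximal_left_idealb (I : {set galg}) : bool :=
  [&& left_idealb I, I != [set: galg] &
      [forall K : {set galg}, (left_idealb K && (I \subset K)) ==>
                               ((K == I) || (K == [set: galg]))]].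

Definition jacobson : {set galg} :=
  \bigcap_(I | maximal_left_idealb I) I.

Definition rel_aug_ideal (H : {set gT}) : {set galg} :=
  \bigcap_(I | two_sided_idealb I &&
               [forall h in H, gdelta h - gdelta 1%g \in I]) I.

End GroupAlgebra.

(* Elements of Delta(G,H) sum to zero on every coset gH.  An element of J(FG)
   is nilpotent (some power of it is idempotent, and J(FG) contains no nonzero
   idempotent), so it acts with trace zero on the permutation module F[G/Y],
   Y = <y>.  G is a Frobenius group with kernel H = <x> and complement Y: the
   identity fixes all |G : Y| = m = 1 (in F) cosets, the other elements of H fix
   none, and every element outside H fixes exactly one.  So the trace of b is
   b(1) + sum_G b - sum_H b, which for b = g0^-1 a with a in J(FG) :&: Delta(G,H)
   is a(g0); hence a = 0. *)

From HB Require Import structures.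
From mathcomp Require Import all_boot all_algebra all_fingroup.
From mathcomp Require Import cyclic pgroup frobenius.
From mathcomp Require Import zify ring.
Set Implicit Arguments. Unset Strict Implicit. Unset Printing Implicit Defensive.
Import GRing.Theory.
Local Open Scope ring_scope.

Section GroupAlgebra.
Variables (F : finFieldType) (gT : finGroupType).
Local Notation galg := (galg F gT).
Implicit Types (a b c r : galg) (I : {set galg}).

Lemma gmulA a b c : gmul (gmul a b) c = gmul a (gmul b c).
Proof.
apply/ffunP=> g; rewrite !ffunE.
under eq_bigr do rewrite ffunE mulr_suml.
rewrite exchange_big; apply: eq_bigr => h _.
rewrite ffunE mulr_sumr (reindex_inj (mulgI h)).
by apply: eq_bigr => l _; rewrite mulrA mulKg invMg mulgA.
Qed.

Lemma gmul_deltal g a h : gmul (gdelta F g) a h = a (g^-1 * h)%g.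
Proof.
rewrite ffunE (bigD1 g) //= big1 => [|u /negPf neq_ug]; last by rewrite ffunE neq_ug mul0r.
by rewrite ffunE eqxx mul1r addr0.
Qed.

Lemma gmul1l a : gmul (gdelta F 1) a = a.
Proof. by apply/ffunP=> g; rewrite gmul_deltal invg1 mul1g. Qed.

Lemma gmul1r a : gmul a (gdelta F 1) = a.
Proof.
apply/ffunP=> g; rewrite ffunE (bigD1 g) //= big1 => [|h neq_hg].
  by rewrite ffunE mulVg eqxx mulr1 addr0.
by rewrite ffunE -eq_mulVg1 (negPf neq_hg) mulr0.
Qed.

Lemma gmulBl a b c : gmul (a - b) c = gmul a c - gmul b c.
Proof.
apply/ffunP=> g; rewrite !ffunE -sumrB.
by apply: eq_bigr => h _; rewrite !ffunE mulrBl.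
Qed.

Lemma gmul0r a : gmul 0 a = 0.
Proof. by apply/ffunP=> g; rewrite !ffunE big1 // => h _; rewrite ffunE mul0r. Qed.

Lemma gmulr0 a : gmul a 0 = 0.
Proof. by apply/ffunP=> g; rewrite !ffunE big1 // => h _; rewrite ffunE mulr0. Qed.

Lemma left_idealP I :
  reflect [/\ 0 \in I, {in I &, forall a b, a - b \in I}
            & forall r, {in I, forall a, gmul r a \in I}]
          (left_idealb I).
Proof.
apply: (iffP and3P) => [[I0 /forall_inP IB /forallP IM]|[I0 IB IM]].
  split=> // [a b aI bI|r a aI]; first by have /forall_inP := IB a aI; apply.
  by have /forall_inP := IM r; apply.
split=> //; first by apply/forall_inP => a aI; apply/forall_inP => b; apply: IB.
by apply/forallP => r; apply/forall_inP; apply: IM.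
Qed.

Lemma two_sided_idealP I :
  reflect (left_idealb I /\ forall r, {in I, forall a, gmul a r \in I})
          (two_sided_idealb I).
Proof.
apply: (iffP andP) => [[lI /forallP IM]|[lI IM]].
  by split=> // r a; have /forall_inP := IM r; apply.
by split=> //; apply/forallP => r; apply/forall_inP; apply: IM.
Qed.

Lemma jacobson0 : 0 \in jacobson F gT.
Proof. by apply/bigcapP => I /and3P[/left_idealP[]]. Qed.

Lemma rel_aug_ideal0 (H : {set gT}) : 0 \in rel_aug_ideal F H.
Proof. by apply/bigcapP => I /andP[/two_sided_idealP[/left_idealP[]]]. Qed.

Lemma jacobsonMl r a : a \in jacobson F gT -> gmul r a \in jacobson F gT.
Proof.
move=> /bigcapP aJ; apply/bigcapP => I maxI.
by have /and3P[/left_idealP[_ _ IM] _ _] := maxI; exact/IM/aJ.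
Qed.

Lemma maximal_left_ideal_exists I :
  left_idealb I -> I != setT -> exists2 M, maximal_left_idealb M & I \subset M.
Proof.
move=> lI IT.
pose P M := [&& left_idealb M, I \subset M & M != setT].
have [|M /and3P[lM IM MT] maxM] := @arg_maxnP _ I P (fun M => #|M|).
  by rewrite /P lI subxx.
exists M => //; rewrite /maximal_left_idealb lM MT /=.
apply/forallP => K; apply/implyP => /andP[lK MK].
have [->|KT] := eqVneq K setT; first by apply/orP; right.
rewrite eq_sym eqEcard MK orbF; apply: maxM.
by rewrite /P lK (subset_trans IM MK).
Qed.

Lemma jacobson_idem_eq0 b : b \in jacobson F gT -> gmul b b = b -> b = 0.
Proof.
move=> bJ bb; apply/eqP; apply: contraT => nz_b.
pose K := [set c | gmul c b == 0].
have lK : left_idealb K.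
  apply/left_idealP; split=> [|c d|r c]; rewrite !inE ?gmul0r //.
    by move=> /eqP c0 /eqP d0; rewrite gmulBl c0 d0 subrr.
  by move=> /eqP c0; rewrite gmulA c0 gmulr0.
have KT : K != setT by apply/negP => /eqP/setP/(_ b); rewrite !inE bb (negPf nz_b).
have [M maxM KM] := maximal_left_ideal_exists lK KT.
have /and3P[/left_idealP[M0 MB MM] MT _] := maxM.
have bM : b \in M by move/bigcapP: bJ; apply.
have b'M : gdelta F 1 - b \in M.
  by apply: (subsetP KM); rewrite inE gmulBl gmul1l bb subrr.
have oneM : gdelta F 1 \in M.
  by have := MB _ _ b'M (MB _ _ M0 bM); rewrite sub0r opprK subrK.
case/negP: MT; apply/eqP/setP => r; rewrite inE -(gmul1r r); exact: MM.
Qed.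

Definition gexp c n := iter n (gmul c) (gdelta F 1).

Lemma gexpD c i j : gexp c (i + j) = gmul (gexp c i) (gexp c j).
Proof. by elim: i => [|i IH]; rewrite ?gmul1l //= IH gmulA. Qed.

Lemma gexpSr c n : gexp c n.+1 = gmul (gexp c n) c.
Proof. by rewrite -addn1 gexpD /= gmul1r. Qed.

(* The powers of c are eventually periodic; a multiple of the period beyond the
   preperiod is an idempotent exponent. *)
Lemma gexp_idem c : exists2 n, (0 < n)%N & gexp c (n + n) = gexp c n.
Proof.
have [i [j [neq_ij eq_ij]]] : exists i j, i != j /\ gexp c i = gexp c j.
  have /injectivePn[i [j neq_ij eq_ij]] : ~~ injectiveb (fun i : 'I_#|galg|.+1 => gexp c i).
    by apply/injectiveP => /leq_card; rewrite card_ord ltnn.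
  by exists (val i), (val j).
wlog lt_ij : i j neq_ij eq_ij / (i < j)%N.
  move=> W; case: (ltngtP i j) => [|lt_ji|eq]; first exact: W.
    by apply: (W j i); rewrite // eq_sym.
  by rewrite eq eqxx in neq_ij.
have period q n : (i <= n)%N -> gexp c (n + q * (j - i)) = gexp c n.
  move=> le_in; elim: q => [|q IH]; first by rewrite addn0.
  have -> : (n + q.+1 * (j - i) = (n + q * (j - i) - i) + j)%N.
    by rewrite mulSn; move: (q * (j - i))%N => qp; lia.
  by rewrite gexpD -eq_ij -gexpD subnK ?IH //; lia.
exists (i.+1 * (j - i))%N; first by rewrite muln_gt0 subn_gt0.
by apply: period; nia.
Qed.

Lemma jacobson_nilpotent c : c \in jacobson F gT -> exists n, gexp c n = 0.
Proof.
move=> cJ; have [[|n] // _ idem] := gexp_idem c.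
exists n.+1; apply: jacobson_idem_eq0; last by rewrite -gexpD.
by rewrite gexpSr; apply: jacobsonMl.
Qed.

End GroupAlgebra.

Section AugmentationKernel.
Variables (F : finFieldType) (gT : finGroupType) (H : {group gT}).
Hypothesis nH : (H <| [set: gT])%g.

(* The kernel of the augmentation FG -> F[G/H]. *)
Definition aug_kernel : {set galg F gT} :=
  [set a : galg F gT | [forall g, \sum_(h in H) a (g * h)%g == 0]].

Lemma aug_kernelP (a : galg F gT) :
  reflect (forall g, \sum_(h in H) a (g * h)%g = 0) (a \in aug_kernel).
Proof. by rewrite inE; apply: (iffP forallP) => sum0 g; apply/eqP. Qed.

Lemma aug_kernel_ideal : two_sided_idealb aug_kernel.
Proof.
apply/two_sided_idealP; split.
  apply/left_idealP; split.
  - by apply/aug_kernelP => g; rewrite big1 // => h _; rewrite ffunE.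
  - move=> a b /aug_kernelP a0 /aug_kernelP b0; apply/aug_kernelP => g.
    by under eq_bigr do rewrite !ffunE; rewrite sumrB a0 b0 subrr.
  - move=> r a /aug_kernelP a0; apply/aug_kernelP => g.
    under eq_bigr do rewrite ffunE.
    rewrite exchange_big big1 // => u _.
    by rewrite -mulr_sumr; under eq_bigr do rewrite mulgA; rewrite a0 mulr0.
move=> r a /aug_kernelP a0; apply/aug_kernelP => g.
under eq_bigr => h _.
  rewrite ffunE (reindex_inj (mulgI (g * h)%g)) /=.
  under eq_bigr do rewrite invMg mulgKV.
  over.
rewrite exchange_big big1 // => w _.
have nHw : w^-1%g \in 'N(H)%g by rewrite (subsetP (normal_norm nH)) ?inE.
rewrite -mulr_suml (reindex_inj (@conjg_inj _ w^-1%g)) /=.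
rewrite (eq_bigl (mem H)) => [|h]; last by rewrite memJ_norm.
under eq_bigr do rewrite conjgE invgK !mulgA mulgKV.
by rewrite a0 mul0r.
Qed.

Lemma aug_kernel_gen h : h \in H -> gdelta F h - gdelta F 1 \in aug_kernel.
Proof.
move=> hH; apply/aug_kernelP => g.
have sum_delta z : \sum_(k in H) (g * k == z)%g%:R = ((g^-1 * z)%g \in H)%:R :> F.
  have [zH|zH] := boolP (g^-1 * z \in H)%g.
    rewrite (bigD1 (g^-1 * z)%g) //= mulKVg eqxx big1 ?addr0 // => k /andP[_ neq_k].
    by rewrite -(inj_eq (mulgI g^-1%g)) mulKg (negPf neq_k).
  rewrite big1 // => k kH; rewrite -(inj_eq (mulgI g^-1%g)) mulKg.
  by case: eqP zH => // <-; rewrite kH.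
under eq_bigr do rewrite !ffunE.
by rewrite sumrB !sum_delta mulg1 groupMr ?subrr.
Qed.

Lemma rel_aug_ideal_sub : rel_aug_ideal F H \subset aug_kernel.
Proof.
apply: bigcap_inf; rewrite aug_kernel_ideal.
by apply/forall_inP; apply: aug_kernel_gen.
Qed.

Lemma aug_kernel_sum (a : galg F gT) : a \in aug_kernel -> #|H|%:R * \sum_g a g = 0.
Proof.
move=> /aug_kernelP a0; rewrite mulr_natl -sumr_const.
rewrite (eq_bigr (fun h => \sum_g a (g * h)%g)) => [|h _]; last first.
  by rewrite (reindex_inj (mulIg h)).
rewrite exchange_big big1 // => g _; exact: a0.
Qed.

End AugmentationKernel.

Lemma char_poly_nilpotent (F : fieldType) n (A : 'M[F]_n.+1) N :
  A ^+ N = 0 -> char_poly A = 'X^(n.+1).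
Proof.
move=> AN0.
pose B : 'M[{poly F}]_n.+1 := map_mx polyC A.
have cXB : GRing.comm ('X%:M : 'M[{poly F}]_n.+1) B.
  by rewrite /GRing.comm -!mulmxE scalar_mxC.
have BN0 : B ^+ N = 0 by rewrite -rmorphXn AN0 raddf0.
have XN : ('X%:M : 'M[{poly F}]_n.+1) ^+ N = ('X ^+ N)%:M.
  by rewrite rmorphXn.
have : char_poly A %| ('X - 0%:P) ^+ (N * n.+1).
  have := congr1 determinant (subrXX_comm N cXB).
  rewrite BN0 subr0 XN -mulmxE det_mulmx det_scalar subr0 exprM => ->.
  exact: dvdp_mulr.
case/dvdp_exp_XsubCP => d _; rewrite subr0.
rewrite eqp_monic ?char_poly_monic ?monicXn // => /eqP charA.
by have := size_char_poly A; rewrite charA size_polyXn => -[->].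
Qed.

Lemma mxtrace_nilpotent (F : fieldType) n (A : 'M[F]_n) N :
  A ^+ N = 0 -> \tr A = 0.
Proof.
case: n A => [|n] A AN0; first by rewrite /mxtrace big_ord0.
apply/eqP; rewrite -oppr_eq0 -char_poly_trace // (char_poly_nilpotent AN0) coefXn.
by rewrite eqn_leq ltnn andbF.
Qed.

Section CosetRepresentation.
Variables (F : finFieldType) (gT : finGroupType) (H Y : {group gT}).
Hypotheses (tiHY : H :&: Y = 1%g) (mulHY : (H * Y)%g = [set: gT]).

Let memHY g : g \in (H * Y)%g. Proof. by rewrite mulHY inE. Qed.

Lemma divgrMr g u : u \in Y -> divgr H Y (g * u)%g = divgr H Y g.
Proof.
move=> uY; rewrite {1}(divgr_eq H Y g) -mulgA.
by rewrite divgrMid ?mem_divgr ?groupM ?mem_remgr.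
Qed.

Lemma divgrMl_divgr l g : divgr H Y (l * divgr H Y g)%g = divgr H Y (l * g)%g.
Proof. by rewrite [X in (l * X)%g]/divgr mulgA (divgrMr (l * g)) ?groupV ?mem_remgr. Qed.

Lemma divgr_fixE h g :
  (divgr H Y (h^-1 * g)%g == g) = (g \in H) && (h ^ g \in Y)%g.
Proof.
have -> : (h ^ g = (g^-1 * (h^-1 * g))^-1)%g by rewrite conjgE !invMg !invgK mulgA.
rewrite groupV; apply/eqP/andP => [fix_g|[gH gY]].
  split; first by rewrite -fix_g mem_divgr.
  by rewrite -[g in (g^-1)%g]fix_g /divgr invMg invgK -mulgA mulVg mulg1 mem_remgr.
by rewrite -{1}(mulKVg g (h^-1 * g)%g) divgrMid.
Qed.

(* The action of b on the permutation module F[G/Y], the coset gY being encoded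
   by the H-component of g. *)
Definition coset_mx (b : galg F gT) : 'M[F]_#|gT| :=
  \matrix_(i, j) \sum_h b h * (divgr H Y (h^-1 * enum_val i)%g == enum_val j)%:R.

Lemma coset_mxM a b : coset_mx (gmul a b) = coset_mx a *m coset_mx b.
Proof.
apply/matrixP => i k; rewrite !mxE.
set g := enum_val i; set w := enum_val k.
under [RHS]eq_bigr do rewrite !mxE.
rewrite -(big_enum_val (fun z => (\sum_h a h * (divgr H Y (h^-1 * g)%g == z)%:R) *
   (\sum_h b h * (divgr H Y (h^-1 * z)%g == w)%:R))) /=.
under [RHS]eq_bigr do rewrite mulr_suml.
rewrite exchange_big /=.
under eq_bigr do rewrite ffunE mulr_suml.
rewrite exchange_big /=; apply: eq_bigr => h _.
rewrite [RHS](bigD1 (divgr H Y (h^-1 * g)))%g //= [X in _ + X]big1 => [|z /negPf zn]; last first.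
  by rewrite eq_sym zn mulr0 mul0r.
rewrite eqxx mulr1 addr0 mulr_sumr (reindex_inj (mulgI h)) /=.
by apply: eq_big => // l _; rewrite divgrMl_divgr mulKg invMg -mulgA mulrA.
Qed.

Lemma mxtrace_coset_mx b :
  \tr (coset_mx b) = \sum_h b h * #|[set g in H | h ^ g \in Y]%g|%:R.
Proof.
rewrite /mxtrace; under eq_bigr do rewrite mxE.
rewrite -(big_enum_val (fun g => \sum_h b h * (divgr H Y (h^-1 * g)%g == g)%:R)) /=.
rewrite exchange_big /=; apply: eq_bigr => h _.
rewrite -mulr_sumr -sum1dep_card natr_sum; congr (_ * _).
by rewrite [RHS]big_mkcond; apply: eq_bigr => g _; rewrite divgr_fixE; case: ifP.
Qed.

Lemma coset_mx0 : coset_mx 0 = 0.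
Proof. by apply/matrixP => i j; rewrite !mxE big1 // => h _; rewrite ffunE mul0r. Qed.

Lemma coset_mx_gexp b n : coset_mx (gexp b n.+1) = coset_mx b ^+ n.+1.
Proof.
elim: n => [|n IH]; first by rewrite /= gmul1r expr1.
by rewrite exprS -IH -mulmxE -coset_mxM.
Qed.

Lemma mxtrace_coset_mx_jacobson b : b \in jacobson F gT -> \tr (coset_mx b) = 0.
Proof.
case/jacobson_nilpotent => n bn0; apply: (@mxtrace_nilpotent _ _ _ n.+1).
by rewrite -coset_mx_gexp /= bn0 gmulr0 coset_mx0.
Qed.

Hypotheses (nH : (H <| [set: gT])%g) (abelH : abelian H) (regHY : semiregular H Y).

Let normH z : z \in 'N(H)%g.
Proof. by rewrite (subsetP (normal_norm nH)) ?inE. Qed.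

Lemma subcent1_outside d : d \notin H -> 'C_H[d]%g = 1%g.
Proof.
move=> dH; set u := remgr H Y d.
have ntu : u \in Y^#%g.
  rewrite !inE mem_remgr // andbT; apply: contraNneq dH => u1.
  by rewrite (divgr_eq H Y d) -/u u1 mulg1 mem_divgr.
apply/trivgP; rewrite -(regHY ntu); apply/subsetP => e /setIP[eH /cent1P cde].
rewrite inE eH; apply/cent1P.
have -> : u = ((divgr H Y d)^-1 * d)%g by rewrite /divgr invMg invgK mulgKV.
apply: commuteM cde; apply/commuteV/(centsP abelH) => //; exact: mem_divgr.
Qed.

Lemma conjg_rcoset d g : g \in H -> (d ^ g \in H :* d)%g.
Proof.
move=> gH; rewrite mem_rcoset (_ : d ^ g * d^-1 = g^-1 * g ^ d^-1)%g.
  by rewrite groupM ?groupV // memJ_norm.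
by rewrite !conjgE invgK !mulgA.
Qed.

Lemma card_coset_fix_outside d :
  d \notin H -> #|[set g in H | d ^ g \in Y]%g| = 1%N.
Proof.
move=> dH; set u := remgr H Y d.
have /setIP[uHd uY] : u \in (H :* d :&: Y)%g by rewrite remgrP.
have injJ : {in H &, injective (conjg d)}.
  move=> g1 g2 g1H g2H /= eq_dg; apply/eqP; rewrite eq_mulgV1; apply/eqP/set1gP.
  rewrite -(subcent1_outside dH) inE groupM ?groupV //=; apply/cent1P.
  by apply/commute_sym/commgP/conjg_fixP; rewrite conjgM eq_dg -conjgM mulgV conjg1.
have imH : [set d ^ g | g in H]%g = (H :* d)%g.
  apply/eqP; rewrite eqEcard card_rcoset card_in_imset // leqnn andbT.
  by apply/subsetP => _ /imsetP[g gH ->]; apply: conjg_rcoset.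
have /imsetP[g0 g0H dg0] : u \in [set d ^ g | g in H]%g by rewrite imH.
rewrite -(cards1 g0); apply: eq_card => g; rewrite !inE.
apply/andP/eqP => [[gH dgY]|->]; last by rewrite g0H -dg0.
apply: injJ => //; rewrite -dg0; apply/eqP; rewrite eq_mulgV1; apply/eqP/set1gP.
rewrite -tiHY inE -mem_rcoset (rcoset_eqP uHd) conjg_rcoset //=.
by rewrite groupM ?groupV.
Qed.

Lemma card_coset_fix h :
  #|[set g in H | h ^ g \in Y]%g| = if h == 1%g then #|H| else (h \notin H).
Proof.
have [->|ntH] := eqVneq h 1%g.
  by apply: eq_card => g; rewrite inE conj1g group1 andbT.
have [hH|] := boolP (h \in H); last exact: card_coset_fix_outside.
apply/eqP; rewrite cards_eq0; apply/eqP/setP => g; rewrite !inE.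
apply/negbTE/negP => /andP[gH hgY]; case/negP: ntH; rewrite -(conjg_eq1 h g).
by apply/eqP/set1gP; rewrite -tiHY inE hgY memJ_norm ?hH.
Qed.

Hypothesis cardH1 : (#|H|%:R : F) = 1.

Lemma jacobson_aug_kernel_eq0 a : a \in jacobson F gT -> a \in aug_kernel F H -> a = 0.
Proof.
move=> aJ aK; have /aug_kernelP cosum0 := aK.
have sum0 : \sum_g a g = 0 by rewrite -[LHS]mul1r -cardH1 aug_kernel_sum.
apply/ffunP => g0; rewrite ffunE.
have sum_out0 : \sum_(h | h \notin H) a (g0 * h)%g = 0.
  move: sum0; rewrite (reindex_inj (mulgI g0)) (bigID (mem H)) /=.
  by rewrite cosum0 add0r.
have fixE h : (if h == 1%g then #|H| else h \notin H)%:R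
                = (h == 1%g)%:R + (h \notin H)%:R :> F.
  by have [->|] := eqVneq h 1%g; rewrite ?cardH1 ?group1 ?addr0 ?add0r.
have := mxtrace_coset_mx_jacobson (jacobsonMl (gdelta F g0^-1%g) aJ).
rewrite mxtrace_coset_mx.
under eq_bigr do rewrite gmul_deltal invgK card_coset_fix fixE mulrDr.
rewrite big_split /= (bigD1 1%g) //= big1 => [|h /negPf ->]; last by rewrite mulr0.
rewrite eqxx mulr1 mulg1 addr0 (bigID (mem H)) /= big1 => [|h ->]; last by rewrite mulr0.
rewrite add0r (eq_bigr (fun h => a (g0 * h)%g)) => [|h /negPf ->]; last by rewrite mulr1.
by rewrite sum_out0 addr0.
Qed.

End CosetRepresentation.

Section MetacyclicT3m.
Variables (gT : finGroupType) (x y : gT) (k m : nat) (t : int).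
Hypotheses (def_m : m = (3 * k).+1%N) (coprime_t1 : gcdz (Posz m) (t - 1)%R = 1%N)
  (gen_xy : <<[set x; y]>>%g = [set: gT]) (ox : #[x]%g = m) (oy : #[y]%g = 3%N)
  (conj_xy : (x ^ y)%g = (x ^+ `|(t %% Posz m)%Z|%N)%g)
  (card_gT : #|[set: gT]| = (3 * m)%N).

Local Open Scope group_scope.

Lemma cycle_normal : <[x]> <| [set: gT].
Proof.
rewrite /normal subsetT -gen_xy gen_subG; apply/subsetP => z.
rewrite !inE => /orP[]/eqP->; rewrite -cycleJ ?conj_xy ?cycleX //.
by rewrite conjgE mulKg cycle_subG cycle_id.
Qed.

Lemma cycle_TI : <[x]> :&: <[y]> = 1.
Proof.
apply: coprime_TIg; rewrite -!orderE ox oy coprime_sym prime_coprime //.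
by rewrite def_m -[(3 * k).+1]addn1 dvdn_addr ?dvdn_mulr.
Qed.

Lemma cycle_mul : <[x]> * <[y]> = [set: gT].
Proof.
apply/eqP; rewrite eqEcard subsetT cardsT -cardsT card_gT.
by rewrite TI_cardMg ?cycle_TI // -[#|_|]/#[x] -[#|_|]/#[y] ox oy mulnC leqnn.
Qed.

Lemma cycle_fixed_by_y j : (x ^+ j) ^ y = x ^+ j -> x ^+ j = 1.
Proof.
rewrite conjXg conj_xy -expgM; set n := `|(t %% Posz m)%Z|%N.
have m_gt0 : (0 < m)%N by rewrite def_m.
have def_n : (n%:Z = t %% m)%Z by rewrite gez0_abs // modz_ge0 // lt0n_neq0.
move=> /eqP; rewrite eq_expg_mod_order ox.
move=> /eqP/(congr1 Posz); rewrite -!modz_nat => /eqP; rewrite eqz_mod_dvd => dvd_m.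
have : (m %| (j%:Z * (t - 1))%R)%Z.
  have -> : (j%:Z * (t - 1) = (n * j)%N%:Z - j%:Z + (j%:Z * (t %/ m)%Z) * m%:Z)%R.
    by rewrite PoszM def_n {1}(divz_eq t m); ring.
  by rewrite rpredD // dvdz_mull.
rewrite Gauss_dvdzl; last by rewrite /coprimez coprime_t1.
by rewrite dvdzE !absz_nat -ox order_dvdn => /eqP.
Qed.

Lemma cycle_semiregular : semiregular <[x]> <[y]>.
Proof.
move=> u /setD1P[ntu /cycleP[i def_u]]; subst u.
apply/trivgP/subsetP => e /setIP[/cycleP[j ->] /cent1P cxu]. apply/set1gP; apply: cycle_fixed_by_y; apply/conjg_fixP/commgP.
have : <[y]> \subset <[y ^+ i]>.
  have prime_y : prime #|<[y]>| by rewrite -[#|_|]/#[y] oy.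
  have [//|ti] := prime_subgroupVti <[y ^+ i]> prime_y.
  by case/negP: ntu; apply/eqP/set1gP; rewrite -ti inE cycle_id mem_cycle.
rewrite cycle_subG => /cycleP[l ->]; exact/commuteX/commute_sym.
Qed.

End MetacyclicT3m.

Local Close Scope ring_scope.

Theorem proposition3p8 (F : finFieldType) (gT : finGroupType)
    (k : nat) (m : nat) (t : int) (x y : gT) :
  (3 \in [pchar F])%R ->
  m = (3 * k).+1 ->
  (t ^+ 3 == 1 %[mod Posz m])%Z ->
  gcdz (Posz m) (t - 1)%R = 1%N ->
  <<[set x; y]>>%g = [set: gT] ->
  #[x]%g = m ->
  #[y]%g = 3 ->
  (x ^ y)%g = (x ^+ `|(t %% Posz m)%Z|%N)%g ->
  #|[set: gT]| = 3 * m ->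
  jacobson F gT :&: rel_aug_ideal F <[x]>%g = [set (0%R : galg F gT)].
Proof.
(* t ^+ 3 = 1 (mod m) only makes the presentation consistent; G is given. *)
move=> char3 def_m _ coprime_t1 gen_xy ox oy conj_xy card_gT.
have nH := cycle_normal gen_xy conj_xy.
have cardH1 : (#|<[x]>%g|%:R : F)%R = 1%R.
  by rewrite -[#|_|]/#[x]%g ox def_m -addn1 natrD natrM (pcharf0 char3) mul0r add0r.
apply/setP => a; rewrite !inE; apply/andP/eqP => [[aJ aD]|->]; last first.
  by rewrite jacobson0 rel_aug_ideal0.
apply: (jacobson_aug_kernel_eq0 (cycle_TI def_m ox oy) (cycle_mul def_m ox oy card_gT)
          nH (cycle_abelian x) (cycle_semiregular def_m coprime_t1 ox oy conj_xy) cardH1 aJ).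
exact: subsetP (rel_aug_ideal_sub F nH) a aD.
Qed.
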